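(* Let $n\ge 3$ and let $\mathfrak{f}_n$ be the $n$-dimensional complex (model) filiform Lie algebra with basis $\{e_i\}_{i=1}^n$ whose only nonzero brackets are $[e_1,e_h]=e_{h-1}$ for $3\le h\le n$. Then $\overline{\mu}(\mathfrak{f}_n)=n$. Moreover, the linear map sending $e_1\mapsto \sum_{i=1}^{n-2}X_{i,i+1}$ and $e_j\mapsto X_{j-1,n}$ for $2\le j\le n$ is an injective Lie algebra homomorphism $\mathfrak{f}_n\to\mathfrak{h}_n$ (a natural representative of a minimal faithful representation).
   Context: All Lie algebras are finite-dimensional over $\mathbb{C}$. For $m\in\mathbb N$, $\mathfrak{h}_m$ denotes the Lie algebra (with commutator bracket) of complex $m\times m$ upper-triangular matrices, and $X_{i,j}$ ($1\le i\le j\le m$) denotes the matrix unit with entry $1$ in position $(i,j)$ and $0$ elsewhere. For a solvable Lie algebra $\mathfrak g$, $\overline{\mu}(\mathfrak g)=\min\{m\in\mathbb N : \mathfrak{h}_m \text{ contains a Lie subalgebra isomorphic to } \mathfrak g\}$. *)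

From HB Require Import structures.
From mathcomp Require Import all_boot all_order all_algebra.
From mathcomp Require Import complex.
From mathcomp Require Import Rstruct.
Set Implicit Arguments. Unset Strict Implicit. Unset Printing Implicit Defensive.
Import Order.TTheory GRing.Theory Num.Theory.
Local Open Scope ring_scope.

Definition C : Type := complex Rdefinitions.R.

(* Conventions: mathematical indices are 1-based; ordinals k : 'I_n stand for
   index k+1. Vectors of the n-dimensional algebra are row vectors 'rV[C]_n,
   coordinates w.r.t. the basis e_1, ..., e_n. *)

Definition ebasis (n j : nat) : 'rV[C]_n := \row_(k < n) (k.+1 == j)%:R.

Definition fil_table (n : nat) (i j : 'I_n) : 'rV[C]_n :=
  let a := i.+1 in let b := j.+1 in
  if (a == 1%N) && (3 <= b)%N then ebasis n b.-1
  else if (b == 1%N) && (3 <= a)%N then - ebasis n a.-1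
  else 0.

Definition fil_bracket (n : nat) (x y : 'rV[C]_n) : 'rV[C]_n :=
  \sum_(i < n) \sum_(j < n) (x 0 i * y 0 j) *: fil_table i j.

(* h_m: upper-triangular m x m matrices (entries below the diagonal vanish) *)
Definition upper_tri (m : nat) (A : 'M[C]_m) : Prop :=
  forall i j : 'I_m, (j < i)%N -> A i j = 0.

Definition mx_comm (m : nat) (A B : 'M[C]_m) : 'M[C]_m := A *m B - B *m A.

Definition inj_lie_hom_into_h (n m : nat) (phi : 'rV[C]_n -> 'M[C]_m) : Prop :=
  [/\ forall (a : C) (x y : 'rV[C]_n), phi (a *: x + y) = a *: phi x + phi y,
      forall x y : 'rV[C]_n, phi (fil_bracket x y) = mx_comm (phi x) (phi y),
      injective phi &
      forall x, upper_tri (phi x)].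

Definition fil_embeds (n m : nat) : Prop :=
  exists phi : 'rV[C]_n -> 'M[C]_m, inj_lie_hom_into_h phi.

Definition mubar_fil_eq (n k : nat) : Prop :=
  fil_embeds n k /\ forall m : nat, fil_embeds n m -> (k <= m)%N.

Definition Xunit (m i j : nat) : 'M[C]_m :=
  \matrix_(r < m, c < m) ((r.+1 == i) && (c.+1 == j))%:R.

Definition fil_rep_basis (n : nat) (k : 'I_n) : 'M[C]_n :=
  if k.+1 == 1%N then \sum_(1 <= i < n.-1) Xunit n i i.+1
  else Xunit n k n.     (* e_j |-> X_{j-1,n} with j = k+1 *)

Definition fil_rep (n : nat) (x : 'rV[C]_n) : 'M[C]_n :=
  \sum_(k < n) x 0 k *: fil_rep_basis k.

From HB Require Import structures.
From mathcomp Require Import all_boot all_algebra.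
From mathcomp Require Import complex Rstruct.
From mathcomp Require Import ring zify.
Set Implicit Arguments. Unset Strict Implicit. Unset Printing Implicit Defensive.
Import GRing.Theory.
Local Open Scope ring_scope.

(* If phi : f_n -> h_m is an injective Lie morphism, then A := phi e_1 and
   Y_j := phi e_j satisfy [A, Y_2] = 0, [A, Y_j] = Y_(j-1) for j >= 3, the Y_j
   pairwise commute and Y_2 <> 0. Deleting the last (resp. first) row and
   column is a Lie morphism h_m -> h_(m-1). If such a restriction does not kill
   Y_2, the relations survive in h_(m-1); if it kills Y_2 but not Y_3, the
   shifted family Y_3, ..., Y_n survives there with n-1 in place of n. If all
   four restrictions vanish, Y_2 and Y_3 are multiples of the corner unit
   X_(1,m), whose commutator with A has corner entry a_11 - a_mm; then
   [A, Y_2] = 0 forces a_11 = a_mm, so Y_2 = [A, Y_3] = 0. Induction on m, with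
   m <= 2 done by hand, gives n <= m. Conversely the explicit representation is
   checked on pairs of basis vectors. *)

Lemma upper_tri0 m : upper_tri (0 : 'M[C]_m).
Proof. by move=> i j _; rewrite mxE. Qed.

Lemma upper_triZ m (c : C) (M : 'M[C]_m) : upper_tri M -> upper_tri (c *: M).
Proof. by move=> uM a b lt_ba; rewrite mxE uM ?mulr0. Qed.

Lemma upper_tri_sum m (I : Type) (r : seq I) (P : pred I) (F : I -> 'M[C]_m) :
  (forall i, P i -> upper_tri (F i)) -> upper_tri (\sum_(i <- r | P i) F i).
Proof. by move=> uF a b lt_ba; rewrite summxE big1 // => i /uF ->. Qed.

Lemma mx_commC m (M N : 'M[C]_m) : mx_comm M N = - mx_comm N M.
Proof. by rewrite /mx_comm opprB. Qed.

Lemma mx_comm_suml m (I : finType) (c : I -> C) (M : I -> 'M[C]_m) N :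
  mx_comm (\sum_i c i *: M i) N = \sum_i c i *: mx_comm (M i) N.
Proof.
rewrite /mx_comm mulmx_suml mulmx_sumr -sumrB; apply: eq_bigr => i _.
by rewrite scalerBr -scalemxAl -scalemxAr.
Qed.

Lemma mx_comm_sumr m (I : finType) (c : I -> C) (M : I -> 'M[C]_m) N :
  mx_comm N (\sum_i c i *: M i) = \sum_i c i *: mx_comm N (M i).
Proof.
rewrite /mx_comm mulmx_suml mulmx_sumr -sumrB; apply: eq_bigr => i _.
by rewrite scalerBr -scalemxAl -scalemxAr.
Qed.

Lemma mx_comm_dim_le1 m (A B : 'M[C]_m) : (m <= 1)%N -> mx_comm A B = 0.
Proof.
case: m A B => [|[|//]] A B _; first by rewrite [mx_comm _ _]flatmx0.
by apply/matrixP => i j; rewrite !ord1 !mxE !big_ord1 mulrC subrr.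
Qed.

Lemma sum_ord2 (F : 'I_2 -> C) : \sum_i F i = F ord0 + F ord_max.
Proof. by rewrite big_ord_recl big_ord1; congr (_ + F _); apply: val_inj. Qed.

Lemma mx_comm2 (A B : 'M[C]_2) : upper_tri A -> upper_tri B ->
  mx_comm A B = ((A ord0 ord0 - A ord_max ord_max) * B ord0 ord_max
                 - (B ord0 ord0 - B ord_max ord_max) * A ord0 ord_max)
                *: delta_mx ord0 ord_max.
Proof.
move=> uA uB; have [A10 B10] : A ord_max ord0 = 0 /\ B ord_max ord0 = 0.
  by split; [apply: uA | apply: uB].
have ord2P (i : 'I_2) : i = ord0 \/ i = ord_max.
  by case: i => [[|[|//]] hi]; [left | right]; apply: val_inj.
apply/matrixP => i j; rewrite !mxE !sum_ord2.
by case: (ord2P i) => ->; case: (ord2P j) => ->; rewrite /= ?A10 ?B10; ring.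
Qed.

Lemma mx_comm_corner k (A : 'M[C]_k.+1) (c : C) :
  mx_comm A (c *: delta_mx ord0 ord_max) ord0 ord_max
  = c * (A ord0 ord0 - A ord_max ord_max).
Proof.
rewrite /mx_comm -scalemxAl -scalemxAr -scalerBr mxE !mxE; congr (c * (_ - _)).
  rewrite (bigD1 ord0) //= big1 => [|l /negbTE l_neq0].
    by rewrite !mxE !eqxx mulr1 addr0.
  by rewrite !mxE l_neq0 mulr0.
rewrite (bigD1 ord_max) //= big1 => [|l /negbTE l_neq_max].
  by rewrite !mxE !eqxx mul1r addr0.
by rewrite !mxE l_neq_max andbF mul0r.
Qed.

Definition upper_lie_morph m m' (P : 'M[C]_m -> 'M[C]_m') : Prop :=
  (forall M, upper_tri M -> upper_tri (P M)) /\
  (forall M N, upper_tri M -> upper_tri N ->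
     P (mx_comm M N) = mx_comm (P M) (P N)).

Lemma upper_lie_morph0 m m' (P : 'M[C]_m -> 'M[C]_m') : upper_lie_morph P -> P 0 = 0.
Proof.
case=> _ cP; have -> : 0 = mx_comm (0 : 'M[C]_m) 0 by rewrite /mx_comm subrr.
by rewrite cP /mx_comm ?subrr //; apply: upper_tri0.
Qed.

Definition ulmx k (M : 'M[C]_k.+1) : 'M[C]_k :=
  \matrix_(i, j) M (widen_ord (leqnSn k) i) (widen_ord (leqnSn k) j).

Definition drmx k (M : 'M[C]_k.+1) : 'M[C]_k :=
  \matrix_(i, j) M (lift ord0 i) (lift ord0 j).

Lemma ulmx_upper_lie_morph k : upper_lie_morph (@ulmx k).
Proof.
split=> [M uM i j lt_ji | M N uM uN]; first by rewrite mxE uM.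
apply/matrixP => i j; rewrite !mxE !big_ord_recr /=.
(* Lets [//] discharge the side conditions of [uN] and [uM]. *)
have lt_max (l : 'I_k) : (widen_ord (leqnSn k) l < @ord_max k)%N := ltn_ord l.
rewrite [N ord_max _]uN ?[M ord_max _]uM // !mulr0 !addr0.
by congr (_ - _); apply: eq_bigr => l _; rewrite !mxE.
Qed.

Lemma drmx_upper_lie_morph k : upper_lie_morph (@drmx k).
Proof.
split=> [M uM i j lt_ji | M N uM uN]; first by rewrite mxE uM.
apply/matrixP => i j; rewrite !mxE !big_ord_recl /=.
rewrite [M _ ord0]uM ?[N _ ord0]uN // !mul0r !add0r.
by congr (_ - _); apply: eq_bigr => l _; rewrite !mxE.
Qed.

Lemma upper_tri_corner k (Y : 'M[C]_k.+1) : upper_tri Y ->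
  ulmx Y = 0 -> drmx Y = 0 -> Y = Y ord0 ord_max *: delta_mx ord0 ord_max.
Proof.
move=> uY /matrixP ul /matrixP dr.
have ul0 (i j : 'I_k.+1) : (i < k)%N -> (j < k)%N -> Y i j = 0.
  move=> lt_ik lt_jk; have := ul (Ordinal lt_ik) (Ordinal lt_jk); rewrite !mxE.
  by congr (Y _ _ = 0); apply: val_inj.
have dr0 (i j : 'I_k.+1) : (0 < i)%N -> (0 < j)%N -> Y i j = 0.
  move=> i_gt0 j_gt0; have lt_i : (i.-1 < k)%N by have := ltn_ord i; lia.
  have lt_j : (j.-1 < k)%N by have := ltn_ord j; lia.
  have := dr (Ordinal lt_i) (Ordinal lt_j); rewrite !mxE.
  by congr (Y _ _ = 0); apply: val_inj; rewrite /= /bump leq0n add1n prednK.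
apply/matrixP => i j; rewrite !mxE.
case: (boolP ((i == ord0) && (j == ord_max))) => [/andP[/eqP-> /eqP->] | not_corner].
  by rewrite mulr1.
rewrite mulr0; move: not_corner; rewrite -!val_eqE /= => not_corner.
have := ltn_ord j; case: (ltnP j i) => [/uY // | le_ij lt_j].
by case: (ltnP j k) => [lt_jk | ge_jk]; [apply: ul0 | apply: dr0]; lia.
Qed.

Definition fil_chain m n (A : 'M[C]_m) (Y : nat -> 'M[C]_m) : Prop :=
  [/\ upper_tri A /\ (forall j, upper_tri (Y j)),
      mx_comm A (Y 2%N) = 0,
      forall j, (3 <= j <= n)%N -> mx_comm A (Y j) = Y j.-1 &
      forall i j, (2 <= i <= n)%N -> (2 <= j <= n)%N -> mx_comm (Y i) (Y j) = 0].

Lemma fil_chain_morph m m' n A Y (P : 'M[C]_m -> 'M[C]_m') :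
  upper_lie_morph P -> fil_chain n A Y -> fil_chain n (P A) (P \o Y).
Proof.
move=> hP [[uA uY] cA2 cAY cYY]; have [uP cP] := hP.
split=> [|||i j hi hj]; first by split=> [|j]; apply: uP.
- by rewrite /= -cP // cA2 (upper_lie_morph0 hP).
- by move=> j hj; rewrite /= -cP // cAY.
- by rewrite /= -cP // cYY // (upper_lie_morph0 hP).
Qed.

Lemma fil_chain_shift m n (A : 'M[C]_m) Y : (3 <= n)%N ->
  fil_chain n A Y -> Y 2%N = 0 -> fil_chain n.-1 A (fun j => Y j.+1).
Proof.
move=> n_ge3 [[uA uY] _ cAY cYY] Y2_0; split=> [|||i j hi hj] //.
- by rewrite cAY // leqnn.
- by move=> j hj; rewrite cAY /= ?prednK //; lia.
- by rewrite /= cYY //; lia.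
Qed.

Lemma fil_chain_dim_le2 m n (A : 'M[C]_m) Y :
  (m <= 2)%N -> (3 <= n)%N -> fil_chain n A Y -> Y 2%N = 0.
Proof.
move=> m_le2 n_ge3 [[uA uY] cA2 cAY cYY].
have Y2E : Y 2%N = mx_comm A (Y 3%N) by rewrite cAY // leqnn n_ge3.
case: m m_le2 A Y uA uY cA2 cAY cYY Y2E => [|[|[|//]]] _ A Y uA uY cA2 _ cYY Y2E;
  try by rewrite Y2E mx_comm_dim_le1.
set dA := A ord0 ord0 - A ord_max ord_max.
set d3 := Y 3%N ord0 ord0 - Y 3%N ord_max ord_max.
set c := dA * Y 3%N ord0 ord_max - d3 * A ord0 ord_max.
have [uY2 uY3] := (uY 2%N, uY 3%N).
have {}Y2E : Y 2%N = c *: delta_mx ord0 ord_max by rewrite Y2E mx_comm2.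
have corner_eq (M N : 'M[C]_2) : M = N -> M ord0 ord_max = N ord0 ord_max.
  by move->.
have dA_c : dA * c = 0.
  have := corner_eq _ _ cA2; rewrite mx_comm2 // Y2E !mxE /= => e.
  by apply: etrans e; rewrite !(mulr1, mulr0) subrr mul0r subr0.
have d3_c : d3 * c = 0.
  have c32 : mx_comm (Y 3%N) (Y 2%N) = 0 by apply: cYY; lia.
  have := corner_eq _ _ c32; rewrite mx_comm2 // Y2E !mxE /= => e.
  by apply: etrans e; rewrite !(mulr1, mulr0) subrr mul0r subr0.
have c_sq : c * c = 0.
  rewrite {2}/c mulrBr [c * (dA * _)]mulrCA [c * (d3 * _)]mulrCA.
  by rewrite !mulrA dA_c d3_c !mul0r subrr.
by rewrite Y2E; move/eqP: c_sq; rewrite mulf_eq0 orbb => /eqP ->; rewrite scale0r.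
Qed.

Lemma fil_chain_corner k n (A : 'M[C]_k.+1) Y : (3 <= n)%N -> fil_chain n A Y ->
  Y 2%N = Y 2%N ord0 ord_max *: delta_mx ord0 ord_max ->
  Y 3%N = Y 3%N ord0 ord_max *: delta_mx ord0 ord_max -> Y 2%N = 0.
Proof.
move=> n_ge3 [_ cA2 cAY _]; set c2 := Y 2%N _ _; set c3 := Y 3%N _ _ => Y2E Y3E.
set d := A ord0 ord0 - A ord_max ord_max.
have c2_d : c2 * d = 0.
  by rewrite -(mx_comm_corner A c2) -Y2E cA2 mxE.
have c2_c3d : c2 = c3 * d.
  by rewrite -(mx_comm_corner A c3) -Y3E cAY // leqnn n_ge3.
have : c2 * c2 = 0 by rewrite {2}c2_c3d mulrCA c2_d mulr0.
by move/eqP; rewrite mulf_eq0 orbb Y2E => /eqP ->; rewrite scale0r.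
Qed.

Lemma fil_chain_dim_ge m n (A : 'M[C]_m) Y :
  (3 <= n)%N -> fil_chain n A Y -> Y 2%N != 0 -> (n <= m)%N.
Proof.
elim: m A Y n => [|k IH] A Y n n_ge3 chain Y2_neq0.
  by rewrite (fil_chain_dim_le2 _ n_ge3 chain) ?eqxx in Y2_neq0.
case: (leqP k.+1 2) => [k_small | k_ge2].
  by rewrite (fil_chain_dim_le2 k_small n_ge3 chain) ?eqxx in Y2_neq0.
case: (leqP n 3) => [n_le3 | n_ge4]; first exact: leq_trans n_le3 k_ge2.
have restrict (P : 'M[C]_k.+1 -> 'M[C]_k) : upper_lie_morph P ->
    P (Y 2%N) != 0 \/ P (Y 3%N) != 0 -> (n <= k.+1)%N.
  move=> hP nz; have chainP := fil_chain_morph hP chain.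
  have [P2_0 | P2_neq0] := eqVneq (P (Y 2%N)) 0; last exact/leqW/(IH _ _ _ n_ge3 chainP).
  have P3_neq0 : P (Y 3%N) != 0 by case: nz; rewrite ?P2_0 ?eqxx.
  have := IH _ _ _ _ (fil_chain_shift n_ge3 chainP P2_0) P3_neq0; lia.
have [[_ uY] _ _ _] := chain.
case: (boolP [&& ulmx (Y 2%N) == 0, drmx (Y 2%N) == 0,
                ulmx (Y 3%N) == 0 & drmx (Y 3%N) == 0]).
  case/and4P => /eqP ul2 /eqP dr2 /eqP ul3 /eqP dr3.
  have := fil_chain_corner n_ge3 chain (upper_tri_corner (uY 2%N) ul2 dr2)
            (upper_tri_corner (uY 3%N) ul3 dr3).
  by move/eqP: Y2_neq0.
rewrite !negb_and => /or4P [] nz.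
- exact: restrict (ulmx_upper_lie_morph k) (or_introl nz).
- exact: restrict (drmx_upper_lie_morph k) (or_introl nz).
- exact: restrict (ulmx_upper_lie_morph k) (or_intror nz).
- exact: restrict (drmx_upper_lie_morph k) (or_intror nz).
Qed.

Lemma fil_bracket_ebasis n a b : (0 < a <= n)%N -> (0 < b <= n)%N ->
  fil_bracket (ebasis n a) (ebasis n b) =
  if (a == 1%N) && (3 <= b)%N then ebasis n b.-1
  else if (b == 1%N) && (3 <= a)%N then - ebasis n a.-1 else 0.
Proof.
case: a b => [//|a] [//|b] /andP[_ lt_a] /andP[_ lt_b].
rewrite -[RHS]/(fil_table (Ordinal lt_a) (Ordinal lt_b)) /fil_bracket.
rewrite (bigD1 (Ordinal lt_a)) //= [X in _ + X]big1 => [|i i_neq_a]; last first.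
  have /negbTE i_neq_a' : (i : nat) != a := i_neq_a.
  by apply: big1 => j _; rewrite mxE eqSS i_neq_a' mul0r scale0r.
rewrite addr0 (bigD1 (Ordinal lt_b)) //= [X in _ + X]big1 => [|j j_neq_b]; last first.
  have /negbTE j_neq_b' : (j : nat) != b := j_neq_b.
  by rewrite !mxE !eqSS j_neq_b' eqxx mulr0 scale0r.
by rewrite !mxE !eqxx mulr1 scale1r !addr0.
Qed.

Lemma fil_embeds_dim_ge n m : (3 <= n)%N -> fil_embeds n m -> (n <= m)%N.
Proof.
move=> n_ge3 [phi [lin hom inj up]].
have phi0 : phi 0 = 0 by have := lin (-1) 0 0; rewrite scaler0 addr0 scaleN1r addNr.
apply: (@fil_chain_dim_ge _ _ (phi (ebasis n 1)) (fun j => phi (ebasis n j)) n_ge3).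
  split=> [|||i j hi hj]; first by split=> *; apply: up.
  - by rewrite -hom fil_bracket_ebasis ?phi0 //; lia.
  - by move=> j /andP[j_ge3 j_le_n]; rewrite -hom fil_bracket_ebasis /= ?j_ge3 //; lia.
  - by rewrite -hom fil_bracket_ebasis ?ifF ?phi0 //; lia.
apply: contra_neq (@oner_neq0 C) => phi2_0.
have lt_1n : (1 < n)%N by lia.
have /rowP/(_ (Ordinal lt_1n)) := inj _ 0 (etrans phi2_0 (esym phi0)).
by rewrite !mxE.
Qed.

Lemma fil_rep_is_linear n : linear (@fil_rep n).
Proof.
move=> a x y; rewrite /fil_rep scaler_sumr -big_split; apply: eq_bigr => k _.
by rewrite !mxE scalerDl scalerA.
Qed.

HB.instance Definition _ n :=
  GRing.isLinear.Build C 'rV[C]_n 'M[C]_n *:%R (@fil_rep n) (@fil_rep_is_linear n).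

Lemma Xunit0 m j : Xunit m 0 j = 0.
Proof. by apply/matrixP => r c; rewrite !mxE. Qed.

Lemma Xunit_mul m i j k l :
  Xunit m i j *m Xunit m k l = ((j == k) && (0 < j <= m)%N)%:R *: Xunit m i l.
Proof.
apply/matrixP => r c; rewrite !mxE.
case: (boolP (0 < j <= m)%N) => [/andP[j_gt0 j_le_m] | j_out]; last first.
  rewrite andbF mul0r big1 // => s _; rewrite !mxE.
  have /negbTE -> : s.+1 != j by apply: contraNneq j_out => <-; rewrite ltn_ord.
  by rewrite andbF mul0r.
have lt_j : (j.-1 < m)%N by lia.
rewrite andbT (bigD1 (Ordinal lt_j)) //= big1 => [|s s_neq_j]; last first.
  rewrite !mxE; have /negbTE -> : s.+1 != j.
    by apply: contraNneq s_neq_j => s_j; apply/eqP/val_inj => /=; lia.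
  by rewrite andbF mul0r.
by rewrite !mxE prednK // eqxx andbT addr0 -!natrM !mulnb andbCA.
Qed.

Lemma upper_tri_Xunit m i j : (i <= j)%N -> upper_tri (Xunit m i j).
Proof.
move=> le_ij a b lt_ba; rewrite mxE (_ : _ && _ = false) //.
by apply/negP => /andP[/eqP a_i /eqP b_j]; lia.
Qed.

Definition fil_rep_e1 n : 'M[C]_n := \sum_(1 <= i < n.-1) Xunit n i i.+1.

Lemma fil_rep_basisE n (k : 'I_n) :
  fil_rep_basis k = if k == 0%N :> nat then fil_rep_e1 n else Xunit n k n.
Proof. by []. Qed.

Lemma fil_rep_e1_mul_Xunit n a : (a < n)%N ->
  fil_rep_e1 n *m Xunit n a n = Xunit n a.-1 n.
Proof.
move=> lt_an; rewrite /fil_rep_e1 mulmx_suml.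
rewrite (eq_big_nat _ _ (F2 := fun i => if i == a.-1 then Xunit n i n else 0)).
  rewrite -big_mkcond big_nat1_eq; case: ifP => // a_out.
  by rewrite (_ : a.-1 = 0%N) ?Xunit0 //; lia.
move=> i /andP[i_ge1 i_lt]; rewrite Xunit_mul.
case: eqP => [<- | i_neq_a] /=; last by rewrite scale0r ifF //; apply/eqP; lia.
by rewrite eqxx (_ : (i < n)%N) ?scale1r //; lia.
Qed.

Lemma Xunit_mul_fil_rep_e1 n a : Xunit n a n *m fil_rep_e1 n = 0.
Proof.
rewrite /fil_rep_e1 mulmx_sumr big_nat_cond big1 // => i /andP[/andP[_ i_lt] _].
by rewrite Xunit_mul (_ : n == i = false) ?scale0r //; apply/eqP; lia.
Qed.

Lemma Xunit_mul_last_col n a b : (b < n)%N -> Xunit n a n *m Xunit n b n = 0.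
Proof.
by move=> lt_bn; rewrite Xunit_mul (_ : n == b = false) ?scale0r //; apply/eqP; lia.
Qed.

Lemma fil_rep_ebasis n (k : 'I_n) : fil_rep (ebasis n k.+1) = fil_rep_basis k.
Proof.
rewrite /fil_rep (bigD1 k) //= big1 => [|l l_neq_k].
  by rewrite mxE eqxx scale1r addr0.
by rewrite mxE eqSS (_ : l == k :> nat = false) ?scale0r //; apply/negbTE.
Qed.

Lemma fil_rep_ebasis_last n j : (1 < j <= n)%N -> fil_rep (ebasis n j) = Xunit n j.-1 n.
Proof.
move=> j_range; have lt_j : (j.-1 < n)%N by lia.
have -> : j = (Ordinal lt_j).+1 by rewrite /= prednK //; lia.
by rewrite fil_rep_ebasis fil_rep_basisE ifF //=; apply/eqP; lia.
Qed.

Lemma fil_rep_table n (i j : 'I_n) :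
  fil_rep (fil_table i j) = mx_comm (fil_rep_basis i) (fil_rep_basis j).
Proof.
have comm_e1 (k : 'I_n) : mx_comm (fil_rep_e1 n) (Xunit n k n) = Xunit n k.-1 n.
  by rewrite /mx_comm fil_rep_e1_mul_Xunit // Xunit_mul_fil_rep_e1 subr0.
have shift (k : 'I_n) : (0 < k)%N ->
    fil_rep (if (2 < k.+1)%N then ebasis n k else 0) = Xunit n k.-1 n.
  move=> k_gt0; case: ifP => [k_ge2 | k_lt2].
    by rewrite fil_rep_ebasis_last //; have := ltn_ord k; lia.
  by rewrite linear0 (_ : k.-1 = 0%N) ?Xunit0 //; lia.
rewrite /fil_table !fil_rep_basisE /= !eqSS.
case: (i =P 0%N :> nat) => [-> | /eqP i_neq0];
  case: (j =P 0%N :> nat) => [-> | /eqP j_neq0] /=.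
- by rewrite linear0 /mx_comm subrr.
- by rewrite comm_e1 shift // lt0n.
- rewrite mx_commC comm_e1 -shift ?lt0n // -linearN.
  by case: ifP; rewrite ?oppr0.
- by rewrite linear0 /mx_comm !Xunit_mul_last_col ?subrr.
Qed.

Lemma fil_rep_bracket n (x y : 'rV[C]_n) :
  fil_rep (fil_bracket x y) = mx_comm (fil_rep x) (fil_rep y).
Proof.
rewrite {2 3}/fil_rep mx_comm_suml linear_sum; apply: eq_bigr => i _.
rewrite linear_sum mx_comm_sumr scaler_sumr; apply: eq_bigr => j _.
by rewrite linearZ /= fil_rep_table scalerA.
Qed.

Lemma upper_tri_fil_rep n (x : 'rV[C]_n) : upper_tri (fil_rep x).
Proof.
apply: upper_tri_sum => k _; apply: upper_triZ; rewrite fil_rep_basisE.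
case: ifP => _; last exact/upper_tri_Xunit/ltnW.
by apply: upper_tri_sum => i _; exact: upper_tri_Xunit.
Qed.

Lemma fil_rep_e1E n (r c : 'I_n) :
  fil_rep_e1 n r c = ((c == r.+1 :> nat) && (r.+2 < n)%N)%:R.
Proof.
pose F i : C := if i == r.+1 then (c == r.+1 :> nat)%:R else 0.
rewrite summxE (eq_big_nat _ _ (F2 := F)).
  rewrite -big_mkcond big_nat1_eq (_ : (0 < r.+1 < n.-1)%N = (r.+2 < n)%N); last first.
    by apply/idP/idP; lia.
  by case: (r.+2 < n)%N; rewrite ?andbT ?andbF.
by move=> i _; rewrite /F mxE eqSS eq_sym; case: eqP => [->|].
Qed.

Lemma fil_rep_entry_dirac n (x : 'rV[C]_n) r c (l0 : 'I_n) :
  (forall l, fil_rep_basis l r c = (l == l0)%:R) -> fil_rep x r c = x 0 l0.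
Proof.
move=> basis_rc; rewrite summxE (bigD1 l0) //= big1 => [|l /negbTE l_neq_l0].
  by rewrite mxE basis_rc eqxx mulr1 addr0.
by rewrite mxE basis_rc l_neq_l0 mulr0.
Qed.

Section FilRepInjective.

Variable p : nat.
Local Notation n := p.+3.

Lemma fil_rep_coord_first (x : 'rV[C]_n) : fil_rep x ord0 (inord 1) = x 0 ord0.
Proof.
apply: fil_rep_entry_dirac => l; rewrite fil_rep_basisE -val_eqE /=.
case: ifP => [_ | l_neq0]; first by rewrite fil_rep_e1E inordK.
by rewrite /Xunit mxE inordK // (_ : 2 == n = false) ?andbF.
Qed.

Lemma fil_rep_coord_last (x : 'rV[C]_n) (k : 'I_p.+2) :
  fil_rep x (widen_ord (leqnSn _) k) ord_max = x 0 (lift ord0 k).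
Proof.
apply: fil_rep_entry_dirac => l; rewrite fil_rep_basisE -val_eqE /=.
case: ifP => [/eqP-> | _]; last by rewrite /Xunit mxE eqxx andbT eq_sym.
rewrite fil_rep_e1E (_ : _ && _ = false) //.
by apply/negP => /andP[/eqP /= ? /= ?]; lia.
Qed.

Lemma fil_rep_inj : injective (@fil_rep n).
Proof.
move=> x y fil_rep_xy; apply/rowP => l.
case: (unliftP ord0 l) => [k -> | ->].
  by rewrite -!fil_rep_coord_last fil_rep_xy.
by rewrite -!fil_rep_coord_first fil_rep_xy.
Qed.

End FilRepInjective.

Theorem proposition5 (n : nat) (hn : (3 <= n)%N) :
  mubar_fil_eq n n /\ inj_lie_hom_into_h (@fil_rep n).
Proof.
have fil_rep_hom : inj_lie_hom_into_h (@fil_rep n).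
  case: n hn => [|[|[|p]]] // _; split.
  - exact: fil_rep_is_linear.
  - exact: fil_rep_bracket.
  - exact: fil_rep_inj.
  - exact: upper_tri_fil_rep.
split=> //; split=> [|m]; first by exists (@fil_rep n).
exact: fil_embeds_dim_ge.
Qed.
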